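(* The Petersen graph has ID-index $3$.
   Context: For a finite simple connected graph $G=(V,E)$ with diameter $d$, a rank assignment is a function $f:V\to\mathbb{R}$; under $f$, the string of a vertex $v$ is the $d$-vector whose $i$-th coordinate is the sum of $f(w)$ over all vertices $w$ with $d(v,w)=i$. The ID-index $IDI(G)$ is the minimum $k$ such that there exists $f:V\to\mathbb{R}$ with $|f(V)|=k$ under which all vertices have distinct strings. *)

From HB Require Import structures.
From mathcomp Require Import all_boot all_order all_algebra.
From mathcomp Require Import reals.
Set Implicit Arguments. Unset Strict Implicit. Unset Printing Implicit Defensive.
Import Order.TTheory GRing.Theory Num.Theory.

Definition simple_graph (T : finType) (e : rel T) : Prop :=
  symmetric e /\ irreflexive e.

Fixpoint ball (T : finType) (e : rel T) (x : T) (n : nat) : {set T} :=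
  match n with
  | 0 => [set x]
  | n'.+1 => ball e x n' :|: [set y | [exists z in ball e x n', e z y]]
  end.

Definition connected_graph (T : finType) (e : rel T) : Prop :=
  forall x y : T, connect e x y.

(* Graph distance: the least n with y in ball e x n (for a connected graph on
   #|T| vertices every distance is < #|T|; unreachable pairs get #|T|). *)
Definition gdist (T : finType) (e : rel T) (x y : T) : nat :=
  find (fun n => y \in ball e x n) (iota 0 #|T|).

Definition diameter (T : finType) (e : rel T) : nat :=
  \max_(p : T * T) gdist e p.1 p.2.

Definition vstring (R : realType) (T : finType) (e : rel T) (f : T -> R) (v : T)
  : seq R :=
  [seq (\sum_(w : T | gdist e v w == i) f w)%R | i <- iota 1 (diameter e)].

Definition nvalues (R : realType) (T : finType) (f : T -> R) : nat :=
  size (undup [seq f v | v <- enum T]).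

Definition identifying (R : realType) (T : finType) (e : rel T) (f : T -> R) : Prop :=
  injective (vstring e f).

Definition IDI_is (R : realType) (T : finType) (e : rel T) (k : nat) : Prop :=
  (exists f : T -> R, identifying e f /\ nvalues f = k) /\
  (forall f : T -> R, identifying e f -> k <= nvalues f).

(* Petersen graph: Kneser graph K(5,2): 2-subsets of {0,...,4},
   adjacent iff disjoint. *)
Definition pvertex := {A : {set 'I_5} | #|A| == 2}.
Definition petersen_adj : rel pvertex :=
  fun A B => [disjoint (val A) & (val B)].

(* In a graph of diameter 2 the second coordinate of a string is the total
   weight minus f v minus the first one, so f is identifying exactly when
   v |-> (f v, sum of f over the neighbours of v) is injective.  If f takes only
   the values a and b, that pair is determined by whether f v = b and by how many
   of the k neighbours carry b, which leaves at most 2 (k + 1) possibilities;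
   for the 3-regular Petersen graph this is 8 < 10, so two values never suffice.
   Three do, as an explicit labelling checked by computation shows. *)

From mathcomp Require Import all_boot all_order all_algebra.
From mathcomp Require Import reals.
Set Implicit Arguments. Unset Strict Implicit. Unset Printing Implicit Defensive.
Import Order.TTheory GRing.Theory Num.Theory.

Arguments ball : simpl never.

Section Balls.
Variables (T : finType) (e : rel T).

Lemma ball0 x : ball e x 0 = [set x].
Proof. by []. Qed.

Lemma ballS x n :
  ball e x n.+1 = ball e x n :|: [set y | [exists z in ball e x n, e z y]].
Proof. by []. Qed.

Lemma mem_ball1 x y : (y \in ball e x 1) = (y == x) || e x y.
Proof.
rewrite ballS ball0 !inE; congr (_ || _).
apply/existsP/idP => [[z /andP[/set1P-> //]] | exy].
by exists x; rewrite inE eqxx.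
Qed.

Lemma mem_ball2 x y z : e x z -> e z y -> y \in ball e x 2.
Proof.
move=> exz ezy; rewrite ballS inE; apply/orP; right.
by rewrite inE; apply/existsP; exists z; rewrite mem_ball1 exz orbT.
Qed.

End Balls.

Lemma card_le_two_valued (M : zmodType) (T : finType) (e : rel T) (k : nat)
    (f : T -> M) (a b : M) :
  (forall v, #|[set w | e v w]| = k) -> (forall v, f v = a \/ f v = b) ->
  injective (fun v => (f v, \sum_(w | e v w) f w)%R) -> #|T| <= 2 * k.+1.
Proof.
move=> regular two_valued inj_f.
have fE w : f w = (a + (b - a) *+ (f w == b))%R.
  case: eqP => [->|nfb]; first by rewrite mulr1n addrC subrK.
  by rewrite mulr0n addr0; case: (two_valued w) => // /nfb.
pose c v := \sum_(w | e v w) (f w == b).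
have c_lt v : c v < k.+1.
  rewrite ltnS -(regular v) -sum1dep_card; apply: leq_sum => w _; exact: leq_b1.
have sumE v : (\sum_(w | e v w) f w = a *+ k + (b - a) *+ c v)%R.
  rewrite (eq_bigr _ (fun w _ => fE w)) big_split /= sumrMnr -(regular v).
  by rewrite sumr_const cardsE.
pose key v : bool * 'I_k.+1 := (f v == b, Ordinal (c_lt v)).
suff /leq_card : injective key by rewrite card_prod card_bool card_ord.
move=> v w [fvw [cvw]]; apply: inj_f.
by rewrite /= !sumE cvw (fE v) (fE w) fvw.
Qed.

Lemma nvalues_le (R : realType) (T : finType) (f : T -> R) (s : seq R) :
  (forall v, f v \in s) -> nvalues f <= size s.
Proof.
move=> f_s; apply: uniq_leq_size (undup_uniq _) _ => x.
by rewrite mem_undup => /mapP[v _ ->].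
Qed.

Lemma nvalues_le2_two_valued (R : realType) (T : finType) (f : T -> R) :
  nvalues f <= 2 -> exists a b, forall v, f v = a \/ f v = b.
Proof.
rewrite /nvalues; set s := undup _ => size_s.
have f_s v : f v \in s by rewrite mem_undup map_f ?mem_enum.
clearbody s; case: s size_s f_s => [|a [|b [|? ?]]] // _ f_s.
- by exists 0%R, 0%R => v; have := f_s v.
- by exists a, a => v; left; apply/eqP; rewrite -mem_seq1.
- by exists a, b => v; have := f_s v; rewrite !inE => /orP[]/eqP; [left | right].
Qed.

Section DiameterTwo.
Variables (T : finType) (e : rel T).
Hypotheses (e_irr : irreflexive e) (ball2_full : forall x y, y \in ball e x 2).
Hypothesis card_gt2 : 2 < #|T|.

Lemma gdist_diam2 x y : gdist e x y = if y == x then 0 else if e x y then 1 else 2.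
Proof.
rewrite /gdist; case: #|T| card_gt2 => [|[|[|n]]] // _ /=.
by rewrite ball0 inE mem_ball1 ball2_full; case: (y == x); case: (e x y).
Qed.

Lemma diameter_diam2 x y : x != y -> ~~ e x y -> diameter e = 2.
Proof.
move=> neq_xy nadj_xy; apply/eqP; rewrite eqn_leq; apply/andP; split.
  by apply/bigmax_leqP => p _; rewrite gdist_diam2; case: ifP => //; case: ifP.
have := leq_bigmax (F := fun p : T * T => gdist e p.1 p.2) (x, y).
by rewrite /= gdist_diam2 eq_sym (negbTE neq_xy) (negbTE nadj_xy).
Qed.

Lemma sum_diam2 (M : nmodType) (f : T -> M) v :
  (\sum_w f w = f v + \sum_(w | e v w) f w + \sum_(w | (w != v) && ~~ e v w) f w)%R.
Proof.
rewrite (bigD1 v) //= (bigID (e v)) /= addrA; congr (_ + _ + _)%R.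
apply: eq_bigl => w; rewrite andb_idl // => evw.
by apply: contraTneq evw => ->; rewrite e_irr.
Qed.

Hypothesis diameter2 : diameter e = 2.

Lemma vstring_diam2 (R : realType) (f : T -> R) v :
  vstring e f v = [:: \sum_(w | e v w) f w; \sum_(w | (w != v) && ~~ e v w) f w]%R.
Proof.
rewrite /vstring diameter2 /=; congr [:: _; _]; apply: eq_bigl => w; rewrite gdist_diam2;
  by case: (w =P v) => [->|/eqP nwv]; rewrite ?eqxx ?e_irr ?nwv //; case: (e v w).
Qed.

Lemma identifying_diam2 (R : realType) (f : T -> R) :
  identifying e f <-> injective (fun v => (f v, \sum_(w | e v w) f w)%R).
Proof.
split=> inj_f v w.
  case=> fvw sum1; apply: inj_f; rewrite !vstring_diam2 sum1; congr [:: _; _].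
  by have := sum_diam2 f v; rewrite (sum_diam2 f w) fvw sum1 => /addrI.
rewrite !vstring_diam2 => -[sum1 sum2]; apply: inj_f; congr (_, _) => //.
by have := sum_diam2 f v; rewrite (sum_diam2 f w) sum1 sum2 => /addIr/addIr.
Qed.

Lemma nvalues_identifying_ge3 (R : realType) (k : nat) (f : T -> R) :
  (forall v, #|[set w | e v w]| = k) -> 2 * k.+1 < #|T| ->
  identifying e f -> 3 <= nvalues f.
Proof.
move=> regular card_big /identifying_diam2 inj_f; rewrite leqNgt ltnS; apply/negP.
case/nvalues_le2_two_valued => a [b two_valued].
by have := card_le_two_valued regular two_valued inj_f; rewrite leqNgt card_big.
Qed.

End DiameterTwo.

Lemma all_iotaP n (P : pred nat) : all P (iota 0 n) -> forall i : 'I_n, P i.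
Proof. by move=> /allP P_all i; apply: P_all; rewrite mem_iota ltn_ord. Qed.

Lemma all_iota2P n (P : nat -> nat -> bool) :
  all (fun i => all (P i) (iota 0 n)) (iota 0 n) -> forall i j : 'I_n, P i j.
Proof. by move=> P_all i; apply: all_iotaP; exact: all_iotaP P_all i. Qed.

Lemma disjoint_set2 (T : finType) (a b c d : T) :
  [disjoint [set a; b] & [set c; d]] = [&& a != c, a != d, b != c & b != d].
Proof. by rewrite disjoints_subset subUset !sub1set !inE !negb_or -andbA. Qed.

(* Finset operations do not reduce, so the combinatorial checks are run on this
   model: index i < 10 stands for the 2-subset ppair i of {0, ..., 4}. *)
Definition petersen_pairs : seq (nat * nat) :=
  [:: (0, 1); (0, 2); (0, 3); (0, 4); (1, 2); (1, 3); (1, 4); (2, 3); (2, 4); (3, 4)].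

Definition ppair (i : nat) : nat * nat := nth (0, 0) petersen_pairs i.

Definition model_adj (i j : nat) : bool :=
  [&& (ppair i).1 != (ppair j).1, (ppair i).1 != (ppair j).2,
      (ppair i).2 != (ppair j).1 & (ppair i).2 != (ppair j).2].

Definition model_sum (g : nat -> nat) (i : nat) : nat :=
  \sum_(0 <= j < 10 | model_adj i j) g j.

(* Value 1 on {0,4} and {1,3}, value 2 on {1,4}, {2,3} and {3,4}. *)
Definition model_witness (i : nat) : nat := nth 0 [:: 0; 0; 0; 1; 0; 1; 2; 2; 0; 2] i.

Lemma ppair_valid :
  all (fun i => [&& (ppair i).1 < 5, (ppair i).2 < 5 & (ppair i).1 != (ppair i).2])
      (iota 0 10).
Proof. by []. Qed.

Lemma model_twin_free :
  all (fun i => all (fun j =>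
    all (fun k => model_adj i k == model_adj j k) (iota 0 10) ==> (i == j))
  (iota 0 10)) (iota 0 10).
Proof. by vm_compute. Qed.

Lemma model_ball2 :
  all (fun i => all (fun j =>
    model_adj i j || has (fun k => model_adj i k && model_adj k j) (iota 0 10))
  (iota 0 10)) (iota 0 10).
Proof. by vm_compute. Qed.

Lemma model_regular : all (fun i => model_sum (fun=> 1) i == 3) (iota 0 10).
Proof. by rewrite /model_sum unlock. Qed.

Lemma model_witness_lt3 : all (fun i => model_witness i < 3) (iota 0 10).
Proof. by []. Qed.

Lemma model_witness_inj :
  all (fun i => all (fun j =>
    [&& model_witness i == model_witness j
      & model_sum model_witness i == model_sum model_witness j] ==> (i == j))
  (iota 0 10)) (iota 0 10).
Proof. by rewrite /model_sum unlock. Qed.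

Definition pair_set (i : 'I_10) : {set 'I_5} := [set inord (ppair i).1; inord (ppair i).2].

Lemma pair_set_card (i : 'I_10) : #|pair_set i| == 2.
Proof.
have /and3P[lt1 lt2 neq] := all_iotaP ppair_valid i.
by rewrite cards2 -val_eqE /= !inordK // neq.
Qed.

Definition pvertex_of (i : 'I_10) : pvertex := exist _ (pair_set i) (pair_set_card i).

Lemma petersen_adj_of (i j : 'I_10) :
  petersen_adj (pvertex_of i) (pvertex_of j) = model_adj i j.
Proof.
have /and3P[? ? _] := all_iotaP ppair_valid i.
have /and3P[? ? _] := all_iotaP ppair_valid j.
by rewrite /petersen_adj disjoint_set2 -!val_eqE /= !inordK.
Qed.

Lemma pvertex_of_inj : injective pvertex_of.
Proof.
move=> i j pv_ij; apply/val_inj/eqP/(implyP (all_iota2P model_twin_free i j)).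
apply/allP => k; rewrite mem_iota => /andP[_ lt_k10].
rewrite -(petersen_adj_of i (Ordinal lt_k10)) -(petersen_adj_of j (Ordinal lt_k10)).
by rewrite pv_ij.
Qed.

Lemma card_pvertex : #|{: pvertex}| = 10.
Proof. by rewrite card_sig -cardsE card_draws card_ord. Qed.

Lemma pvertex_of_bij : bijective pvertex_of.
Proof. by apply: inj_card_bij pvertex_of_inj _; rewrite card_pvertex card_ord. Qed.

Lemma pvertex_of_surj (A : pvertex) : exists i, pvertex_of i = A.
Proof. by have [psi _ psiK] := pvertex_of_bij; exists (psi A). Qed.

Lemma sum_petersen_adj_of (F : pvertex -> nat) (g : nat -> nat) :
  (forall j, F (pvertex_of j) = g j) ->
  forall i, \sum_(w | petersen_adj (pvertex_of i) w) F w = model_sum g i.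
Proof.
move=> Fg i; rewrite (reindex pvertex_of) /=; last exact: onW_bij pvertex_of_bij.
by rewrite /model_sum big_mkord; apply: eq_big => j; rewrite ?petersen_adj_of ?Fg.
Qed.

Lemma petersen_irr : irreflexive petersen_adj.
Proof.
by move=> [A cardA]; rewrite /petersen_adj /= -setI_eq0 setIid -cards_eq0 (eqP cardA).
Qed.

Lemma petersen_ball2 A B : B \in ball petersen_adj A 2.
Proof.
case: (pvertex_of_surj A) => i <-; case: (pvertex_of_surj B) => j <-.
case/orP: (all_iota2P model_ball2 i j) => [adj_ij | /hasP[k]].
  by rewrite ballS inE mem_ball1 petersen_adj_of adj_ij orbT.
rewrite mem_iota => /andP[_ lt_k10] /andP[].
rewrite -(petersen_adj_of i (Ordinal lt_k10)) -(petersen_adj_of (Ordinal lt_k10) j).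
exact: mem_ball2.
Qed.

Lemma petersen_regular A : #|[set B | petersen_adj A B]| = 3.
Proof.
case: (pvertex_of_surj A) => i <-.
rewrite -sum1dep_card (sum_petersen_adj_of (g := fun=> 1)) //.
exact/eqP/(all_iotaP model_regular).
Qed.

Lemma card_pvertex_gt2 : 2 < #|{: pvertex}|.
Proof. by rewrite card_pvertex. Qed.

Lemma petersen_diameter : diameter petersen_adj = 2.
Proof.
pose i1 : 'I_10 := Ordinal (isT : 1 < 10).
have neq : pvertex_of ord0 != pvertex_of i1 by rewrite (inj_eq pvertex_of_inj).
have nadj : ~~ petersen_adj (pvertex_of ord0) (pvertex_of i1) by rewrite petersen_adj_of.
exact: diameter_diam2 petersen_ball2 card_pvertex_gt2 _ _ neq nadj.
Qed.

Lemma petersen_identifyingE (R : realType) (f : pvertex -> R) :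
  identifying petersen_adj f <->
  injective (fun v => (f v, \sum_(w | petersen_adj v w) f w)%R).
Proof.
exact: identifying_diam2 petersen_irr petersen_ball2 card_pvertex_gt2 petersen_diameter R f.
Qed.

Lemma petersen_nvalues_ge3 (R : realType) (f : pvertex -> R) :
  identifying petersen_adj f -> 3 <= nvalues f.
Proof.
apply: (nvalues_identifying_ge3 petersen_irr petersen_ball2 card_pvertex_gt2 petersen_diameter)
  petersen_regular _.
by rewrite card_pvertex.
Qed.

Lemma petersen_identifying_three_valued (R : realType) :
  exists f : pvertex -> R,
    identifying petersen_adj f /\ forall v, f v \in [seq n%:R%R | n <- iota 0 3].
Proof.
have [psi pvK psiK] := pvertex_of_bij.
pose f v : R := (model_witness (psi v))%:R%R.
have sum_f i :
    (\sum_(w | petersen_adj (pvertex_of i) w) f w = (model_sum model_witness i)%:R)%R.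
  by rewrite /f -natr_sum (sum_petersen_adj_of (g := model_witness)) // => j; rewrite pvK.
exists f; split => [|v].
  apply/petersen_identifyingE => v w.
  rewrite -(psiK v) -(psiK w) !sum_f /f !pvK => -[/eqP + /eqP]; rewrite !eqr_nat => fij sij.
  congr pvertex_of; apply/val_inj/eqP/(implyP (all_iota2P model_witness_inj _ _)).
  by rewrite fij sij.
by rewrite /f; apply: map_f; rewrite mem_iota (all_iotaP model_witness_lt3).
Qed.

Theorem mainTheorem10 (R : realType) :
  IDI_is R petersen_adj 3.
Proof.
split; last exact: petersen_nvalues_ge3.
have [f [f_id f_vals]] := petersen_identifying_three_valued R.
exists f; split => //; apply/eqP; rewrite eqn_leq petersen_nvalues_ge3 // andbT.
by apply: leq_trans (nvalues_le f_vals) _; rewrite size_map size_iota.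
Qed.
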